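(* Let $(D,\prec,\succ,\alpha)$ be a Hom-dendriform algebra and $T:D\to D$ an averaging operator on it. Define $x\prec^T_\vdash y=T(x)\prec y$, $x\prec^T_\dashv y=x\prec T(y)$, $x\succ^T_\vdash y=T(x)\succ y$, $x\succ^T_\dashv y=x\succ T(y)$ for $x,y\in D$. Then $(D,\prec^T_\vdash,\prec^T_\dashv,\succ^T_\vdash,\succ^T_\dashv,\alpha)$ is a Hom-quadri-dendriform algebra.
   Context: All vector spaces are over a field of characteristic zero. A Hom-dendriform algebra is $(D,\prec,\succ,\alpha)$ with $\prec,\succ$ bilinear on $D$ and $\alpha:D\to D$ linear such that for all $x,y,z$: $\alpha(x)\prec(y\prec z+y\succ z)=(x\prec y)\prec\alpha(z)$; $\alpha(x)\succ(y\prec z)=(x\succ y)\prec\alpha(z)$; $\alpha(x)\succ(y\succ z)=(x\prec y+x\succ y)\succ\alpha(z)$. An averaging operator on $(D,\prec,\succ,\alpha)$ is a linear map $T:D\to D$ such that for all $x,y\in D$: $Tx\prec Ty=T(Tx\prec y)=T(x\prec Ty)$, $Tx\succ Ty=T(Tx\succ y)=T(x\succ Ty)$, and $T\circ\alpha=\alpha\circ T$. A Hom-quadri-dendriform algebra is a tuple $(E,\prec_\vdash,\prec_\dashv,\succ_\vdash,\succ_\dashv,\gamma)$ with four bilinear operations on $E$ and $\gamma:E\to E$ linear such that for all $x,y,z\in E$: (Q1) $(x\prec_\vdash y)\prec_\vdash\gamma(z)=(x\prec_\dashv y)\prec_\vdash\gamma(z)=\gamma(x)\prec_\vdash(y\prec_\vdash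 z+y\succ_\vdash z)$; (Q2) $(x\succ_\vdash y)\prec_\vdash\gamma(z)=(x\succ_\dashv y)\prec_\vdash\gamma(z)=\gamma(x)\succ_\vdash(y\prec_\vdash z)$; (Q3) $\gamma(x)\succ_\vdash(y\succ_\vdash z)=(x\prec_\vdash y+x\succ_\vdash y)\succ_\vdash\gamma(z)=(x\prec_\dashv y+x\succ_\dashv y)\succ_\vdash\gamma(z)$; (Q4) $\gamma(x)\succ_\vdash(y\succ_\vdash z)=(x\prec_\dashv y+x\succ_\vdash y)\succ_\vdash\gamma(z)=(x\prec_\vdash y+x\succ_\dashv y)\succ_\vdash\gamma(z)$; (Q5) $(x\prec_\vdash y)\prec_\dashv\gamma(z)=\gamma(x)\prec_\vdash(y\prec_\dashv z+y\succ_\dashv z)$; (Q6) $(x\succ_\vdash y)\prec_\dashv\gamma(z)=\gamma(x)\succ_\vdash(y\prec_\dashv z)$; (Q7) $\gamma(x)\succ_\vdash(y\succ_\dashv z)=(x\prec_\vdash y+x\succ_\vdash y)\succ_\dashv\gamma(z)$; (Q8) $(x\prec_\dashv y)\prec_\dashv\gamma(z)=\gamma(x)\prec_\dashv(y\prec_\vdash z+y\succ_\vdash z)=\gamma(x)\prec_\dashv(y\prec_\dashv z+y\succ_\dashv z)$; (Q9) $(x\prec_\dashv y)\prec_\dashv\gamma(z)=\gamma(x)\prec_\dashv(y\prec_\vdash z+y\succ_\dashv z)=\gamma(x)\prec_\dashv(y\prec_\dashv z+y\succ_\vdash z)$; (Q10) $(x\succ_\dashv y)\prec_\dashv\gamma(z)=\gamma(x)\succ_\dashv(y\prec_\vdash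 z)=\gamma(x)\succ_\dashv(y\prec_\dashv z)$; (Q11) $\gamma(x)\succ_\dashv(y\succ_\vdash z)=\gamma(x)\succ_\dashv(y\succ_\dashv z)=(x\prec_\dashv y+x\succ_\dashv y)\succ_\dashv\gamma(z)$. *)

From HB Require Import structures.
From mathcomp Require Import all_boot all_order all_algebra.
Set Implicit Arguments. Unset Strict Implicit. Unset Printing Implicit Defensive.
Import GRing.Theory.
Local Open Scope ring_scope.

Definition linear_map (F : fieldType) (V : lmodType F) (f : V -> V) : Prop :=
  forall (a : F) (x y : V), f (a *: x + y) = a *: f x + f y.

Definition bilinear_op (F : fieldType) (V : lmodType F) (m : V -> V -> V) : Prop :=
  (forall (a : F) (x y z : V), m (a *: x + y) z = a *: m x z + m y z) /\
  (forall (a : F) (x y z : V), m x (a *: y + z) = a *: m x y + m x z).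

Definition HomDendriform (F : fieldType) (V : lmodType F)
  (prec succ : V -> V -> V) (alpha : V -> V) : Prop :=
  [/\ bilinear_op prec, bilinear_op succ, linear_map alpha &
   forall x y z : V,
   [/\ prec (alpha x) (prec y z + succ y z) = prec (prec x y) (alpha z),
       succ (alpha x) (prec y z) = prec (succ x y) (alpha z) &
       succ (alpha x) (succ y z) = succ (prec x y + succ x y) (alpha z)]].

Definition averaging_op (F : fieldType) (V : lmodType F)
  (prec succ : V -> V -> V) (alpha : V -> V) (T : V -> V) : Prop :=
  [/\ linear_map T,
   forall x y : V, prec (T x) (T y) = T (prec (T x) y) /\
                   T (prec (T x) y) = T (prec x (T y)),
   forall x y : V, succ (T x) (T y) = T (succ (T x) y) /\
                   T (succ (T x) y) = T (succ x (T y)) &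
   forall x : V, T (alpha x) = alpha (T x)].

(* Hom-quadri-dendriform algebra (E, pl, pr, sl, sr, gamma), where
   pl = prec_|-, pr = prec_-|, sl = succ_|-, sr = succ_-| . *)
Definition HomQuadriDendriform (F : fieldType) (V : lmodType F)
  (pl pr sl sr : V -> V -> V) (g : V -> V) : Prop :=
  [/\ bilinear_op pl, bilinear_op pr, bilinear_op sl, bilinear_op sr &
      linear_map g] /\
  forall x y z : V,
  (
      pl (pl x y) (g z) = pl (pr x y) (g z) /\
      pl (pr x y) (g z) = pl (g x) (pl y z + sl y z)
      /\
      pl (sl x y) (g z) = pl (sr x y) (g z) /\
      pl (sr x y) (g z) = sl (g x) (pl y z)
      /\
      sl (g x) (sl y z) = sl (pl x y + sl x y) (g z) /\
      sl (pl x y + sl x y) (g z) = sl (pr x y + sr x y) (g z)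
      /\
      sl (g x) (sl y z) = sl (pr x y + sl x y) (g z) /\
      sl (pr x y + sl x y) (g z) = sl (pl x y + sr x y) (g z)
      /\
      pr (pl x y) (g z) = pl (g x) (pr y z + sr y z)
      /\
      pr (sl x y) (g z) = sl (g x) (pr y z)
      /\
      sl (g x) (sr y z) = sr (pl x y + sl x y) (g z)
      /\
      pr (pr x y) (g z) = pr (g x) (pl y z + sl y z) /\
      pr (g x) (pl y z + sl y z) = pr (g x) (pr y z + sr y z)
      /\
      pr (pr x y) (g z) = pr (g x) (pl y z + sr y z) /\
      pr (g x) (pl y z + sr y z) = pr (g x) (pr y z + sl y z)
      /\
      pr (sr x y) (g z) = sr (g x) (pl y z) /\
      sr (g x) (pl y z) = sr (g x) (pr y z)
      /\
      sr (g x) (sl y z) = sr (g x) (sr y z) /\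
      sr (g x) (sr y z) = sr (pr x y + sr x y) (g z)).

(* Twisting by an averaging operator moves T through every product:
   T (T x < y) = T (x < T y) = T x < T y, and likewise for >, while T
   commutes with alpha. Expanding both sides of each Hom-quadri-dendriform
   identity therefore turns it into one of the three Hom-dendriform
   identities evaluated at T x, T y, T z, or into a trivial identity. *)
From HB Require Import structures.
From mathcomp Require Import all_boot all_order all_algebra.
Set Implicit Arguments. Unset Strict Implicit. Unset Printing Implicit Defensive.
Local Open Scope ring_scope.

Section LinearMaps.
Variables (F : fieldType) (V : lmodType F).

Lemma linear_mapD (f : V -> V) : linear_map f -> {morph f : x y / x + y}.
Proof. by move=> lin_f x y; have := lin_f 1 x y; rewrite !GRing.scale1r. Qed.

Lemma bilinear_op_compl (m : V -> V -> V) (f : V -> V) :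
  bilinear_op m -> linear_map f -> bilinear_op (fun x y => m (f x) y).
Proof. by move=> [ml mr] lin_f; split=> a x y z; rewrite ?lin_f ?ml ?mr. Qed.

Lemma bilinear_op_compr (m : V -> V -> V) (f : V -> V) :
  bilinear_op m -> linear_map f -> bilinear_op (fun x y => m x (f y)).
Proof. by move=> [ml mr] lin_f; split=> a x y z; rewrite ?lin_f ?ml ?mr. Qed.

End LinearMaps.

Section AveragingTwist.
Variables (F : fieldType) (V : lmodType F).
Variables (prec succ : V -> V -> V) (alpha T : V -> V).
Hypothesis dendr : HomDendriform prec succ alpha.
Hypothesis avg : averaging_op prec succ alpha T.

Lemma hom_assoc_prec x y z :
  prec (alpha x) (prec y z + succ y z) = prec (prec x y) (alpha z).
Proof. by case: dendr => _ _ _ /(_ x y z) []. Qed.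

Lemma hom_assoc_mid x y z :
  succ (alpha x) (prec y z) = prec (succ x y) (alpha z).
Proof. by case: dendr => _ _ _ /(_ x y z) []. Qed.

Lemma hom_assoc_succ x y z :
  succ (alpha x) (succ y z) = succ (prec x y + succ x y) (alpha z).
Proof. by case: dendr => _ _ _ /(_ x y z) []. Qed.

Lemma averaging_precTl x y : T (prec (T x) y) = prec (T x) (T y).
Proof. by case: avg => _ /(_ x y) [-> _]. Qed.

Lemma averaging_precTr x y : T (prec x (T y)) = prec (T x) (T y).
Proof. by case: avg => _ /(_ x y) [-> ->]. Qed.

Lemma averaging_succTl x y : T (succ (T x) y) = succ (T x) (T y).
Proof. by case: avg => _ _ /(_ x y) [-> _]. Qed.

Lemma averaging_succTr x y : T (succ x (T y)) = succ (T x) (T y).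
Proof. by case: avg => _ _ /(_ x y) [-> ->]. Qed.

Lemma averaging_alpha x : T (alpha x) = alpha (T x).
Proof. by case: avg. Qed.

End AveragingTwist.

Theorem corollary3p12 (F : fieldType) (V : lmodType F)
  (charF0 : [pchar F] =i pred0)
  (prec succ : V -> V -> V) (alpha T : V -> V) :
  HomDendriform prec succ alpha ->
  averaging_op prec succ alpha T ->
  HomQuadriDendriform
    (fun x y => prec (T x) y) (fun x y => prec x (T y))
    (fun x y => succ (T x) y) (fun x y => succ x (T y)) alpha.
Proof.
move=> dendr avg; have [bil_prec bil_succ lin_alpha _] := dendr.
have [lin_T _ _ _] := avg.
split.
  by split; [apply: bilinear_op_compl | apply: bilinear_op_compr
            | apply: bilinear_op_compl | apply: bilinear_op_compr | ].
move=> x y z /=.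
rewrite !(linear_mapD lin_T) !(averaging_precTl avg) !(averaging_precTr avg).
rewrite !(averaging_succTl avg) !(averaging_succTr avg) !(averaging_alpha avg).
by repeat split; rewrite ?(hom_assoc_prec dendr) ?(hom_assoc_mid dendr)
  ?(hom_assoc_succ dendr).
Qed.
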